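(* Let $a,b,c$ be positive numbers with $a<b<c$ and $b-a<c-\lfloor c/b\rfloor b<a$. Then for every $t\in\mathcal S_{a,b,c}$ there is exactly one vector $\mathbf x\in\mathcal B_b^0$ with $\mathbf M_{a,b,c}(t)\mathbf x=\mathbf 1$.
   Context: For $a,b,c>0$ and $t\in\mathbb R$, $\mathbf M_{a,b,c}(t)=(\chi_{[0,c)}(t-\mu+\lambda))_{\mu\in a\mathbb Z,\lambda\in b\mathbb Z}$ is the infinite matrix with rows indexed by $a\mathbb Z$ and columns by $b\mathbb Z$, acting by $(\mathbf M_{a,b,c}(t)\mathbf x)(\mu)=\sum_{\lambda\in b\mathbb Z}\chi_{[0,c)}(t-\mu+\lambda)\mathbf x(\lambda)$. $\mathcal B_b$ is the set of vectors $(\mathbf x(\lambda))_{\lambda\in b\mathbb Z}$ with entries in $\{0,1\}$, and $\mathcal B_b^0=\{\mathbf x\in\mathcal B_b:\mathbf x(0)=1\}$. $\mathbf 1$ denotes the vector indexed by $a\mathbb Z$ with all entries $1$. $\mathcal S_{a,b,c}=\{t\in\mathbb R:\mathbf M_{a,b,c}(t)\mathbf x=\mathbf 1\text{ for some }\mathbf x\in\mathcal B_b^0\}$. *)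

From Stdlib Require Import Reals Lra ZArith List.
Open Scope R_scope.

Definition chi0c (c s : R) : R :=
  if Rle_dec 0 s then (if Rlt_dec s c then 1 else 0) else 0.

(* A vector indexed by bZ is encoded as a function Z -> R: entry at
   lambda = b*n is x n.  B_b : entries in {0,1}. *)
Definition in_Bb (x : Z -> R) : Prop := forall n : Z, x n = 0 \/ x n = 1.
Definition in_Bb0 (x : Z -> R) : Prop := in_Bb x /\ x 0%Z = 1.

(* Entry (mu, lambda) = (a*m, b*n) of M_{a,b,c}(t). *)
Definition Mentry (a b c t : R) (m n : Z) : R :=
  chi0c c (t - a * IZR m + b * IZR n).

Definition fsum_Z (f : Z -> R) (s : R) : Prop :=
  exists l : list Z, NoDup l /\ (forall n, ~ In n l -> f n = 0) /\
    fold_right Rplus 0 (map f l) = s.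

Definition M_x_eq_1 (a b c t : R) (x : Z -> R) : Prop :=
  forall m : Z, fsum_Z (fun n => Mentry a b c t m n * x n) 1.

Definition S_abc (a b c : R) (t : R) : Prop :=
  exists x, in_Bb0 x /\ M_x_eq_1 a b c t x.

(* Call column n "selected in row m"
   by x if n lies in the window of row m (0 <= t - a m + b n < c) and
   x(n) = 1.  Since the entries of row m times x are 0/1 values summing to
   1, every row of a solution selects exactly one column.

   Two solutions x, y select the same column in a row m0 whose window
   contains the column 0.  Agreement propagates from row m to rows m +- 1:
   either the common column of row m stays in the window of the new row
   (and is then selected there by both), or the new selections left the
   window of row m, which forces b n into a fixed half-open interval of
   length a < b, leaving room for a single n.  Hence x and y select the
   same column in every row; as every column lies in the window of some
   row, x = y. *)

From Stdlib Require Import Reals ZArith.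
From Stdlib Require Import Lra Lia List Classical FunctionalExtensionality.
Open Scope R_scope.

Lemma fold_sum_nonneg (f : Z -> R) (l : list Z) :
  (forall n, 0 <= f n) -> 0 <= fold_right Rplus 0 (map f l).
Proof. intros Hf; induction l as [|k l IH]; simpl; [lra|]. specialize (Hf k); lra. Qed.

Lemma fold_sum_ge_term (f : Z -> R) (l : list Z) (n : Z) :
  (forall k, 0 <= f k) -> In n l -> f n <= fold_right Rplus 0 (map f l).
Proof.
  intros Hf; induction l as [|k l IH]; simpl; [tauto|]. intros [<-|Hn].
  - pose proof (fold_sum_nonneg f l Hf); lra.
  - specialize (IH Hn); specialize (Hf k); lra.
Qed.

Lemma fold_sum_ge_two_terms (f : Z -> R) (l : list Z) (n1 n2 : Z) :
  (forall k, 0 <= f k) -> NoDup l -> In n1 l -> In n2 l -> n1 <> n2 ->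
  f n1 + f n2 <= fold_right Rplus 0 (map f l).
Proof.
  intros Hf; induction l as [|k l IH]; simpl; [tauto|]. intros Hnd H1 H2 Hne.
  inversion Hnd as [|? ? Hk Hnd']; subst.
  destruct H1 as [<-|H1], H2 as [<-|H2].
  - congruence.
  - pose proof (fold_sum_ge_term f l n2 Hf H2); lra.
  - pose proof (fold_sum_ge_term f l n1 Hf H1); lra.
  - specialize (IH Hnd' H1 H2 Hne); specialize (Hf k); lra.
Qed.

Lemma fold_sum_zero (f : Z -> R) (l : list Z) :
  (forall n, f n = 0) -> fold_right Rplus 0 (map f l) = 0.
Proof. intros Hf; induction l as [|k l IH]; simpl; [lra|]. rewrite Hf, IH; lra. Qed.

Lemma fsum01_exists_one (f : Z -> R) :
  (forall n, f n = 0 \/ f n = 1) -> fsum_Z f 1 -> exists n, f n = 1.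
Proof.
  intros H01 [l [_ [_ Hsum]]].
  destruct (classic (exists n, f n = 1)) as [Hex|Hnone]; auto.
  exfalso. rewrite fold_sum_zero in Hsum; [lra|].
  intros n; destruct (H01 n); auto. exfalso; eauto.
Qed.

Lemma fsum01_unique_one (f : Z -> R) :
  (forall n, f n = 0 \/ f n = 1) -> fsum_Z f 1 ->
  forall n1 n2, f n1 = 1 -> f n2 = 1 -> n1 = n2.
Proof.
  intros H01 [l [Hnd [Hout Hsum]]] n1 n2 E1 E2.
  destruct (Z.eq_dec n1 n2) as [|Hne]; auto.
  assert (Hnn : forall n, 0 <= f n) by (intros n; destruct (H01 n); lra).
  assert (Hin : forall n, f n = 1 -> In n l).
  { intros n En; destruct (classic (In n l)) as [|Hn]; auto.
    rewrite (Hout n Hn) in En; lra. }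
  pose proof (fold_sum_ge_two_terms f l n1 n2 Hnn Hnd (Hin n1 E1) (Hin n2 E2) Hne).
  lra.
Qed.

Lemma int_eq_of_close (b : R) (p q : Z) :
  0 < b -> b * IZR p - b * IZR q < b -> b * IZR q - b * IZR p < b -> p = q.
Proof.
  intros hb H1 H2.
  assert (D1 : IZR (p - q) < 1)
    by (rewrite minus_IZR; apply (Rmult_lt_reg_l b); lra).
  assert (D2 : IZR (q - p) < 1)
    by (rewrite minus_IZR; apply (Rmult_lt_reg_l b); lra).
  apply lt_IZR in D1; apply lt_IZR in D2; lia.
Qed.

Lemma row_of_real (a u : R) : 0 < a -> exists m : Z, 0 <= u - a * IZR m < a.
Proof.
  intros ha. exists (up (u / a) - 1)%Z. rewrite minus_IZR.
  destruct (archimed (u / a)) as [H1 H2].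
  assert (E : u = a * (u / a)) by (field; lra).
  split; nra.
Qed.

Section Uniqueness.
Variables a b c t : R.
Hypothesis ha : 0 < a.
Hypothesis hab : a < b.
Hypothesis hac : a < c.

Definition in_window (m n : Z) : Prop := 0 <= t - a * IZR m + b * IZR n < c.

Definition selects (x : Z -> R) (m n : Z) : Prop := in_window m n /\ x n = 1.

Definition solution (x : Z -> R) : Prop := in_Bb0 x /\ M_x_eq_1 a b c t x.

Lemma row_term_01 (x : Z -> R) (m n : Z) : in_Bb x ->
  Mentry a b c t m n * x n = 0 \/ Mentry a b c t m n * x n = 1.
Proof.
  intros Hx. unfold Mentry, chi0c.
  destruct (Rle_dec _ _); [destruct (Rlt_dec _ _)|];
    destruct (Hx n) as [-> | ->]; lra.
Qed.

Lemma row_term_one (x : Z -> R) (m n : Z) : in_Bb x ->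
  Mentry a b c t m n * x n = 1 <-> selects x m n.
Proof.
  intros Hx. unfold Mentry, chi0c, selects, in_window.
  destruct (Rle_dec _ _); [destruct (Rlt_dec _ _)|];
    destruct (Hx n) as [-> | ->]; split; intros; lra.
Qed.

Lemma solution_selects (x : Z -> R) (m : Z) : solution x -> exists n, selects x m n.
Proof.
  intros [[Hx _] HM].
  destruct (fsum01_exists_one _ (fun n => row_term_01 x m n Hx) (HM m)) as [n Hn].
  exists n; apply (row_term_one x m n Hx); exact Hn.
Qed.

Lemma solution_selects_once (x : Z -> R) (m n1 n2 : Z) :
  solution x -> selects x m n1 -> selects x m n2 -> n1 = n2.
Proof.
  intros [[Hx _] HM] S1 S2.
  apply (fsum01_unique_one _ (fun n => row_term_01 x m n Hx) (HM m));
    apply (row_term_one x m _ Hx); assumption.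
Qed.

Lemma entering_next_row (m n : Z) :
  in_window (m + 1) n -> ~ in_window m n -> c <= t - a * IZR m + b * IZR n < c + a.
Proof. unfold in_window; rewrite plus_IZR; intros Hin Hout. split; [|lra]. nra. Qed.

Lemma entering_prev_row (m n : Z) :
  in_window (m - 1) n -> ~ in_window m n -> -a <= t - a * IZR m + b * IZR n < 0.
Proof. unfold in_window; rewrite minus_IZR; intros Hin Hout. split; [lra|]. nra. Qed.

Lemma offset_interval_unique (m n1 n2 : Z) (lo : R) :
  lo <= t - a * IZR m + b * IZR n1 < lo + a ->
  lo <= t - a * IZR m + b * IZR n2 < lo + a -> n1 = n2.
Proof. intros H1 H2. apply (int_eq_of_close b); lra. Qed.

Definition agree_on_row (x y : Z -> R) (m : Z) : Prop :=
  forall n1 n2, selects x m n1 -> selects y m n2 -> n1 = n2.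

Lemma agree_on_neighbour_row (x y : Z -> R) (m m' : Z) (lo : R) :
  solution x -> solution y ->
  (forall n, in_window m' n -> ~ in_window m n ->
     lo <= t - a * IZR m + b * IZR n < lo + a) ->
  agree_on_row x y m -> agree_on_row x y m'.
Proof.
  intros Sx Sy Hentering Hagree n1 n2 [W1 X1] [W2 Y2].
  destruct (solution_selects x m Sx) as [n [Wn Xn]].
  destruct (solution_selects y m Sy) as [n' Sn'].
  pose proof (Hagree n n' (conj Wn Xn) Sn') as <-.
  destruct Sn' as [_ Yn].
  destruct (classic (in_window m' n)) as [Wn'|Hleft].
  - (* the common column of row m is still selected in row m' *)
    transitivity n.
    + exact (solution_selects_once x m' n1 n Sx (conj W1 X1) (conj Wn' Xn)).
    + exact (solution_selects_once y m' n n2 Sy (conj Wn' Yn) (conj W2 Y2)).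
  - (* otherwise both new selections entered the window *)
    assert (N1 : ~ in_window m n1).
    { intros Wm; apply Hleft.
      rewrite (solution_selects_once x m n n1 Sx (conj Wn Xn) (conj Wm X1)); exact W1. }
    assert (N2 : ~ in_window m n2).
    { intros Wm; apply Hleft.
      rewrite (solution_selects_once y m n n2 Sy (conj Wn Yn) (conj Wm Y2)); exact W2. }
    exact (offset_interval_unique m n1 n2 lo (Hentering n1 W1 N1) (Hentering n2 W2 N2)).
Qed.

Lemma agree_on_all_rows (x y : Z -> R) (m0 : Z) :
  solution x -> solution y -> agree_on_row x y m0 -> forall m, agree_on_row x y m.
Proof.
  intros Sx Sy A0.
  assert (Hprev : forall m n, in_window (m - 1) n -> ~ in_window m n ->
            - a <= t - a * IZR m + b * IZR n < - a + a).
  { intros m n Hin Hout; pose proof (entering_prev_row m n Hin Hout); lra. }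
  assert (Hk : forall k, agree_on_row x y (m0 + k)).
  { intros k; induction k as [|k IH|k IH] using Z.peano_ind.
    - rewrite Z.add_0_r; exact A0.
    - rewrite <- Z.add_1_r, Z.add_assoc.
      exact (agree_on_neighbour_row x y _ _ c Sx Sy (entering_next_row _) IH).
    - rewrite <- Z.sub_1_r, Z.add_sub_assoc.
      exact (agree_on_neighbour_row x y _ _ (- a) Sx Sy (Hprev _) IH). }
  intros m; replace m with (m0 + (m - m0))%Z by lia; apply Hk.
Qed.

Lemma solution_unique (x y : Z -> R) : solution x -> solution y -> y = x.
Proof.
  intros Sx Sy.
  destruct (row_of_real a t ha) as [m0 Hm0].
  assert (W0 : in_window m0 0) by (unfold in_window; simpl; lra).
  assert (A0 : agree_on_row x y m0).
  { intros n1 n2 S1 S2.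
    rewrite <- (solution_selects_once x m0 0 n1 Sx (conj W0 (proj2 (proj1 Sx))) S1).
    exact (solution_selects_once y m0 0 n2 Sy (conj W0 (proj2 (proj1 Sy))) S2). }
  pose proof (agree_on_all_rows x y m0 Sx Sy A0) as Aall.
  apply functional_extensionality; intros n.
  destruct (row_of_real a (t + b * IZR n) ha) as [m Hm].
  assert (Wm : in_window m n) by (unfold in_window; lra).
  destruct (proj1 (proj1 Sx) n) as [ex|ex], (proj1 (proj1 Sy) n) as [ey|ey];
    try congruence.
  - destruct (solution_selects x m Sx) as [h Sh].
    rewrite (Aall m h n Sh (conj Wm ey)) in Sh. destruct Sh; lra.
  - destruct (solution_selects y m Sy) as [h Sh].
    rewrite <- (Aall m n h (conj Wm ex) Sh) in Sh. destruct Sh; lra.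
Qed.

End Uniqueness.

Theorem proposition3p9 (a b c : R) :
  0 < a -> 0 < b -> 0 < c -> a < b -> b < c ->
  b - a < c - IZR (Int_part (c / b)) * b ->
  c - IZR (Int_part (c / b)) * b < a ->
  forall t : R, S_abc a b c t ->
  exists x : Z -> R, (in_Bb0 x /\ M_x_eq_1 a b c t x) /\
    forall y : Z -> R, in_Bb0 y /\ M_x_eq_1 a b c t y -> y = x.
Proof.
  intros ha _ _ hab hbc _ _ t [x Sx].
  exists x; split; [exact Sx|].
  intros y Sy. apply (solution_unique a b c t); [exact ha | exact hab | lra | exact Sx | exact Sy].
Qed.
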